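(* Let $f:\mathbb{R}^n\to\mathbb{R}$ be a continuously differentiable convex function, let $h:\mathbb{R}^n\to\mathbb{R}$ be a continuously differentiable strictly convex function, and assume $f$ is $L_h$-smooth relative to $h$ for some $L_h>0$, i.e. $L_h h - f$ is convex. Let $s$ be a positive integer, let $C_s=\{x\in\mathbb{R}^n: \|x\|_0\le s\}$, and let $x^*$ be an optimal solution of $\min\{f(x): x\in C_s\}$. Let $L>L_h$. Then $$x^*\in \operatorname*{argmin}_{y\in C_s}\ \nabla f(x^* )^T(y-x^* )+L\,D_h(y,x^* ).$$
   Context: $\|x\|_0$ denotes the number of nonzero entries of $x$. The Bregman distance generated by $h$ is $D_h(y,x)=h(y)-h(x)-\nabla h(x)^T(y-x)$. *)

From HB Require Import structures.
From mathcomp Require Import all_boot all_order all_algebra.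
From mathcomp Require Import all_classical all_reals all_analysis.
Set Implicit Arguments. Unset Strict Implicit. Unset Printing Implicit Defensive.
Import Order.TTheory GRing.Theory Num.Theory.
Import numFieldNormedType.Exports.
Local Open Scope classical_set_scope.
Local Open Scope ring_scope.

Section Defs.
Variables (R : realType) (n : nat).

Definition dotp (u v : 'rV[R]_n) : R := \sum_(i < n) u ord0 i * v ord0 i.

Definition grad (f : 'rV[R]_n -> R) (x : 'rV[R]_n) : 'rV[R]_n :=
  \row_(i < n) 'D_(delta_mx ord0 i) f x.

Definition C1 (f : 'rV[R]_n -> R) : Prop :=
  (forall x, differentiable f x) /\ continuous (grad f).

Definition convex_fun (f : 'rV[R]_n -> R) : Prop :=
  forall (x y : 'rV[R]_n) (t : R), 0 <= t <= 1 ->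
    f (t *: x + (1 - t) *: y) <= t * f x + (1 - t) * f y.

Definition strictly_convex_fun (f : 'rV[R]_n -> R) : Prop :=
  forall (x y : 'rV[R]_n) (t : R), x != y -> 0 < t < 1 ->
    f (t *: x + (1 - t) *: y) < t * f x + (1 - t) * f y.

Definition norm0 (x : 'rV[R]_n) : nat := #|[set i : 'I_n | x ord0 i != 0]|.

Definition sparse_set (s : nat) : set 'rV[R]_n := [set x | (norm0 x <= s)%N].

Definition bregman (h : 'rV[R]_n -> R) (y x : 'rV[R]_n) : R :=
  h y - h x - dotp (grad h x) (y - x).

Definition is_argmin (A : set 'rV[R]_n) (g : 'rV[R]_n -> R) (x : 'rV[R]_n) : Prop :=
  A x /\ forall y, A y -> g x <= g y.

End Defs.

From HB Require Import structures.
From mathcomp Require Import all_boot all_order all_algebra.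
From mathcomp Require Import all_classical all_reals all_analysis.
From mathcomp Require Import lra.
Set Implicit Arguments. Unset Strict Implicit. Unset Printing Implicit Defensive.
Import Order.TTheory GRing.Theory Num.Theory.
Import numFieldNormedType.Exports.
Local Open Scope classical_set_scope.
Local Open Scope ring_scope.

(* Relative smoothness gives the descent bound f y <= f x + <grad f x, y - x> + Lh D_h(y, x);
   at a minimiser x of f over the constraint set, f y >= f x, hence
   <grad f x, y - x> + L D_h(y, x) >= (L - Lh) D_h(y, x) >= 0, the value of the model at x.
   Convexity of h makes the Bregman distance nonnegative. *)

Lemma derive_le_of_segment_convex (R : realType) (V : normedModType R)
    (g : V -> R) (x v : V) :
  (forall t, 0 < t < 1 -> g (x + t *: v) <= g x + t * (g (x + v) - g x)) ->
  derivable g x v -> 'D_v g x <= g (x + v) - g x.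
Proof.
move=> cvx dg.
set q := fun t : R => t^-1 *: ((g \o shift x) (t *: v) - g x).
have q_cvg : q @ 0^' --> 'D_v g x by exact: dg.
have q_cvg_right : q @ 0^'+ --> 'D_v g x.
  move=> A /q_cvg /nbhs_ballP [e e0 H]; exists e => //= t xe_t.
  by rewrite lt_def => /andP [tne0 _]; apply: H.
apply: (cvgr_to_le q_cvg_right).
near=> t.
have t0 : 0 < t by near: t; exact: nbhs_right_gt.
have t1 : t < 1 by near: t; exact: nbhs_right_lt.
rewrite /q /= -[t^-1 *: _]/(t^-1 * _) ler_pdivrMl // [t *: v + x]addrC.
by have := cvx t; rewrite t0 t1 => /(_ isT); lra.
Unshelve. all: by end_near.
Qed.

Section Bregman.
Variables (R : realType) (n : nat).
Implicit Types (f g h : 'rV[R]_n -> R) (x y v : 'rV[R]_n).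

Lemma dotp0 (u : 'rV[R]_n) : dotp u 0 = 0.
Proof. by rewrite /dotp big1 // => i _; rewrite mxE mulr0. Qed.

Lemma derive_grad_dotp g x v : differentiable g x -> 'D_v g x = dotp (grad g x) v.
Proof.
move=> dg; rewrite deriveE // [in LHS](row_sum_delta v) linear_sum /dotp.
by apply: eq_bigr => i _; rewrite linearZ /= mxE -deriveE // mulrC.
Qed.

Lemma bregmanE g y x :
  differentiable g x -> bregman g y x = g y - g x - 'D_(y - x) g x.
Proof. by move=> dg; rewrite /bregman derive_grad_dotp. Qed.

Lemma bregmanxx g x : bregman g x x = 0.
Proof. by rewrite /bregman !subrr dotp0 subrr. Qed.

Lemma strictly_convex_fun_convex g : strictly_convex_fun g -> convex_fun g.
Proof.
move=> scg x y t /andP [t0 t1].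
have [<-|xy] := eqVneq x y.
  by rewrite -scalerDl subrKC scale1r; lra.
have [->|tn0] := eqVneq t 0; first by rewrite scale0r add0r subr0 scale1r; lra.
have [->|tn1] := eqVneq t 1; first by rewrite scale1r subrr scale0r addr0; lra.
by apply/ltW/scg => //; rewrite !lt_neqAle eq_sym tn0 tn1 t0 t1.
Qed.

Lemma bregman_ge0 h y x : convex_fun h -> differentiable h x -> 0 <= bregman h y x.
Proof.
move=> cvx dh; have : 'D_(y - x) h x <= h (x + (y - x)) - h x.
  apply: derive_le_of_segment_convex; last exact: diff_derivable.
  move=> t /andP [t0 t1]; rewrite subrKC.
  have -> : x + t *: (y - x) = t *: y + (1 - t) *: x.
    by rewrite scalerBr scalerBl scale1r addrCA addrA.
  by have := cvx y x t; rewrite (ltW t0) (ltW t1) => /(_ isT); lra.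
by rewrite subrKC bregmanE //; lra.
Qed.

Lemma bregman_scale_sub (a : R) f h y x :
  differentiable f x -> differentiable h x ->
  bregman (fun z => a * h z - f z) y x = a * bregman h y x - bregman f y x.
Proof.
move=> df dh; have dah : derivable (a \*: h) x (y - x).
  by apply: derivableZ; apply: diff_derivable.
rewrite /bregman -!derive_grad_dotp //; last first.
  by apply: differentiableB => //; apply: differentiableZ.
rewrite -[fun z => _]/(a \*: h - f) deriveB //; last exact: diff_derivable.
rewrite deriveZ; last exact: diff_derivable.
rewrite -[a *: _]/(a * _); lra.
Qed.

Lemma relatively_smooth_bregman_le (Lh : R) f h y x :
  differentiable f x -> differentiable h x ->
  convex_fun (fun z => Lh * h z - f z) ->
  bregman f y x <= Lh * bregman h y x.
Proof.
move=> df dh cvx; rewrite -subr_ge0 -bregman_scale_sub //.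
by apply: bregman_ge0 => //; apply: differentiableB => //; apply: differentiableZ.
Qed.

Lemma argmin_bregman_model (A : set 'rV[R]_n) f h (Lh L : R) x :
  differentiable f x -> differentiable h x -> convex_fun h -> convex_fun (fun z => Lh * h z - f z) -> Lh <= L ->
  is_argmin A f x ->
  is_argmin A (fun y => dotp (grad f x) (y - x) + L * bregman h y x) x.
Proof.
move=> df dh cvx_h smooth LhL [Ax xmin]; split => // y Ay.
rewrite subrr dotp0 bregmanxx mulr0 addr0.
have descent := relatively_smooth_bregman_le y df dh smooth.
have Dh_ge0 := bregman_ge0 y cvx_h dh.
have := xmin y Ay; rewrite /bregman in descent Dh_ge0 *.
by nra.
Qed.

End Bregman.

Theorem lemma3p2 (R : realType) (n : nat) (f h : 'rV[R]_n -> R) (Lh L : R)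
  (s : nat) (xstar : 'rV[R]_n) :
  C1 f -> convex_fun f ->
  C1 h -> strictly_convex_fun h ->
  0 < Lh -> convex_fun (fun x => Lh * h x - f x) ->
  (0 < s)%N ->
  is_argmin (@sparse_set R n s) f xstar ->
  Lh < L ->
  is_argmin (@sparse_set R n s)
    (fun y => dotp (grad f xstar) (y - xstar) + L * bregman h y xstar) xstar.
Proof.
move=> [df _] _ [dh _] /strictly_convex_fun_convex cvx_h _ smooth _ xmin /ltW LhL.
exact: (argmin_bregman_model (df xstar) (dh xstar) cvx_h smooth LhL xmin).
Qed.
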